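(* Let $G$ be a quasitopological group. Then $G$ is dense-ultraconnected if and only if the topology of $G$ is indiscrete.
   Context: A quasitopological group is a group with a topology for which multiplication is separately continuous and inversion is continuous; no separation axioms assumed. A space is ultraconnected if it contains no two disjoint non-empty closed subsets; a space is dense-ultraconnected if every dense subset of it (with the subspace topology) is ultraconnected. *)

From HB Require Import structures.
From mathcomp Require Import all_boot all_algebra.
From mathcomp Require Import all_classical all_reals topology.
Set Implicit Arguments. Unset Strict Implicit. Unset Printing Implicit Defensive.
Local Open Scope classical_set_scope.

Definition is_group (T : Type) (mul : T -> T -> T) (inv : T -> T) (e : T) : Prop :=
  [/\ (forall x y z, mul x (mul y z) = mul (mul x y) z),
      (forall x, mul e x = x /\ mul x e = x) &
      (forall x, mul (inv x) x = e /\ mul x (inv x) = e)].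

Definition quasitopological_group (T : topologicalType)
  (mul : T -> T -> T) (inv : T -> T) (e : T) : Prop :=
  [/\ is_group mul inv e,
      (forall a : T, continuous (mul a)),
      (forall a : T, continuous (fun x => mul x a)) &
      continuous inv].

(* Closed subsets of the subspace D are exactly
   the sets D `&` C with C closed in T. *)
Definition subspace_ultraconnected (T : topologicalType) (D : set T) : Prop :=
  forall A B : set T,
    (exists C, closed C /\ A = D `&` C) ->
    (exists C, closed C /\ B = D `&` C) ->
    A !=set0 -> B !=set0 -> A `&` B !=set0.

Definition dense_ultraconnected (T : topologicalType) : Prop :=
  forall D : set T, dense D -> subspace_ultraconnected D.

Definition indiscrete (T : topologicalType) : Prop :=
  forall U : set T, open U -> U = set0 \/ U = setT.

From mathcomp Require Import all_boot all_algebra.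
From mathcomp Require Import all_classical all_reals topology.
Set Implicit Arguments. Unset Strict Implicit. Unset Printing Implicit Defensive.
Local Open Scope classical_set_scope.

(* The key notion is the specialization relation: x specializes to y when
   every open set containing x contains y (equivalently x is in the closure
   of {y}).  In a quasitopological group this relation is symmetric, because
   for any y, z the continuous map w |-> y * (w^-1 * z) exchanges y and z.

   - If T is indiscrete, every nonempty closed set is all of T, so any two
     nonempty closed subsets of any subspace meet: T is dense-ultraconnected.
   - Conversely, T is dense in itself, so T is ultraconnected: for any points
     x, y the closures of {x} and {y} share a point w.  Then w specializes to
     both x and y; by symmetry x specializes to w, hence to y.  So every open
     set containing some x contains every y, i.e. T is indiscrete.
   Only the second direction uses the group structure. *)

Definition specializes (T : topologicalType) (x y : T) : Prop :=
  forall V : set T, open V -> V x -> V y.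

Lemma specializes_trans (T : topologicalType) (x y z : T) :
  specializes x y -> specializes y z -> specializes x z.
Proof. by move=> sxy syz V oV Vx; apply: syz => //; apply: sxy. Qed.

Lemma closure_set1_specializes (T : topologicalType) (x y : T) :
  closure [set y] x -> specializes x y.
Proof.
move=> cx V oV Vx.
by have [_ [/= -> Vy]] := cx V (open_nbhs_nbhs (conj oV Vx)).
Qed.

Lemma dense_setT (T : topologicalType) : dense (@setT T).
Proof. by move=> O [o Oo] _; exists o. Qed.

Lemma indiscrete_closed_full (T : topologicalType) (C : set T) :
  indiscrete T -> closed C -> C !=set0 -> C = setT.
Proof.
move=> hI cC [c Cc]; have oCC : open (~` C) by rewrite openC.
case: (hI _ oCC) => hCC; first by rewrite -(setCK C) hCC setC0.
by have : (~` C) c by rewrite hCC.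
Qed.

Lemma indiscrete_subspace_ultraconnected (T : topologicalType) (D : set T) :
  indiscrete T -> subspace_ultraconnected D.
Proof.
move=> hI A B [C [cC ->]] [C' [cC' ->]] [a [Da Ca]] [b [Db C'b]].
have C'T := indiscrete_closed_full hI cC' (ex_intro _ b C'b).
by exists a; split; split => //; rewrite C'T.
Qed.

Lemma ultraconnected_symmetric_indiscrete (T : topologicalType) :
  subspace_ultraconnected (@setT T) ->
  (forall x y : T, specializes x y -> specializes y x) ->
  indiscrete T.
Proof.
move=> hU hsym U oU.
have [[x Ux]|U0] := pselect (U !=set0); last first.
  by left; apply/seteqP; split => // p Up; apply: U0; exists p.
right; apply/seteqP; split => // y _.
have closure1 (p : T) : exists C, closed C /\ setT `&` closure [set p] = setT `&` C.
  by exists (closure [set p]); split => //; exact: closed_closure.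
have inside (p : T) : (setT `&` closure [set p]) !=set0.
  by exists p; split => //; exact: subset_closure.
have [w [[_ wx] [_ wy]]] := hU _ _ (closure1 x) (closure1 y) (inside x) (inside y).
have sxw : specializes x w by apply: hsym; exact: closure_set1_specializes.
exact: (specializes_trans sxw (closure_set1_specializes wy)).
Qed.

Section QuasitopologicalGroup.
Variables (T : topologicalType) (mul : T -> T -> T) (inv : T -> T) (e : T).
Hypothesis hG : quasitopological_group mul inv e.

Lemma swap_map_continuous (y z : T) :
  continuous (fun w => mul y (mul (inv w) z)).
Proof.
have [_ hl hr hi] := hG.
by move=> w; exact: continuous_comp (continuous_comp (hi w) (hr z _)) (hl y _).
Qed.

(* The specialization relation of a quasitopological group is symmetric:
   the continuous map above sends y to z and z to y. *)
Lemma quasitopological_specializes_sym (z y : T) :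
  specializes z y -> specializes y z.
Proof.
have [[hA hE hV] _ _ _] := hG.
move=> szy V oV Vy.
pose f w := mul y (mul (inv w) z).
have ofV : open (f @^-1` V) by move: (@swap_map_continuous y z) => /continuousP; apply.
have fy : f y = z by rewrite /f hA (hV y).2 (hE z).1.
have fz : f z = y by rewrite /f (hV z).1 (hE y).2.
by rewrite -fy; apply: (szy (f @^-1` V)) => //=; rewrite fz.
Qed.

End QuasitopologicalGroup.

Theorem mainTheorem20 (T : topologicalType) (mul : T -> T -> T) (inv : T -> T) (e : T) :
  quasitopological_group mul inv e ->
  (dense_ultraconnected T <-> indiscrete T).
Proof.
move=> hG; split => [hD | hI D _].
- apply: ultraconnected_symmetric_indiscrete; first exact: hD _ (@dense_setT T).
  exact: quasitopological_specializes_sym hG.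
- exact: indiscrete_subspace_ultraconnected.
Qed.
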